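(* Let $\Phi:[a,b]\to\mathbb{C}$ be continuous and nowhere zero. For integers $n,m\ge1$ and $x_0,x\in[a,b]$, $$\big((\Phi X^{(2n-1)})\star X^{(2m)}\big)(x_0,x)=A_{n,m}X^{(2n+2m)}(x_0,x),\qquad \Big(\big(\tfrac{1}{\Phi}\widetilde X^{(2n-1)}\big)\star\widetilde X^{(2m)}\Big)(x_0,x)=A_{n,m}\widetilde X^{(2n+2m)}(x_0,x),$$ $$\big((\Phi X^{(2n-1)})\star X^{(2m-1)}\big)(x_0,x)=B_{n,m}X^{(2n+2m-1)}(x_0,x),\qquad \Big(\big(\tfrac{1}{\Phi}\widetilde X^{(2n-1)}\big)\star\widetilde X^{(2m-1)}\Big)(x_0,x)=B_{n,m}\widetilde X^{(2n+2m-1)}(x_0,x),$$ where $A_{n,m}=\frac{(2n-1)!(2m)!}{(2n+2m)!}$ and $B_{n,m}=\frac{(2n-1)!(2m-1)!}{(2n+2m-1)!}$.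
   Context: For $s,x\in[a,b]$ the $\Phi$-power functions are defined recursively by $X^{(0)}(s,x)\equiv 1$, $\widetilde X^{(0)}(s,x)\equiv 1$ and, for $n\ge 1$, $$X^{(n)}(s,x)=n\int_{s}^x X^{(n-1)}(s,\xi)\,\big(\Phi(\xi)\big)^{(-1)^n}\,d\xi,\qquad \widetilde X^{(n)}(s,x)=n\int_{s}^x \widetilde X^{(n-1)}(s,\xi)\,\Big(\frac{1}{\Phi(\xi)}\Big)^{(-1)^n}\,d\xi.$$ The Volterra composition (of the first type) of two-variable functions is $(f\star g)(x,y)=\int_x^y f(x,\xi)\,g(\xi,y)\,d\xi$. Here $\Phi X^{(k)}$ denotes the two-variable function $(s,x)\mapsto\Phi(x)X^{(k)}(s,x)$ and $\frac1\Phi\widetilde X^{(k)}$ denotes $(s,x)\mapsto\frac{1}{\Phi(x)}\widetilde X^{(k)}(s,x)$. *)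

From Stdlib Require Import Reals Arith Factorial.
From Coquelicot Require Import Coquelicot.
Open Scope R_scope.

Definition CRInt (f : R -> C) (a b : R) : C :=
  (RInt (fun t => Re (f t)) a b, RInt (fun t => Im (f t)) a b).

Definition signpow (n : nat) (z : C) : C :=
  if Nat.even n then z else Cinv z.

Fixpoint Xpow (Phi : R -> C) (n : nat) (s x : R) : C :=
  match n with
  | O => RtoC 1
  | S k => Cmult (RtoC (INR (S k)))
             (CRInt (fun xi => Cmult (Xpow Phi k s xi) (signpow (S k) (Phi xi))) s x)
  end.

Definition Xtilde (Phi : R -> C) (n : nat) (s x : R) : C :=
  Xpow (fun t => Cinv (Phi t)) n s x.

Definition volterra (f g : R -> R -> C) (x y : R) : C :=
  CRInt (fun xi => Cmult (f x xi) (g xi y)) x y.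

Definition A_coef (n m : nat) : R :=
  INR (fact (2*n-1)) * INR (fact (2*m)) / INR (fact (2*n+2*m)).
Definition B_coef (n m : nat) : R :=
  INR (fact (2*n-1)) * INR (fact (2*m-1)) / INR (fact (2*n+2*m-1)).

(* Fix p odd and g(s) = Phi(s) X^(p)(x0,s), and induct on k.  Since
   X^(k+1)(s,x) = (k+1) int_s^x X^(k)(s,eta) w(eta) d eta, exchanging the order of
   integration over the triangle x0 <= s <= eta <= x gives
     int_x0^x g(s) X^(k+1)(s,x) ds
       = (k+1) int_x0^x (int_x0^eta g(s) X^(k)(s,eta) ds) w(eta) d eta,
   and because p+1 is even, the weight w = Phi^((-1)^(k+1)) is also the weight at
   step p+k+2 of the recursion for X^(p+k+2); the inner integral is the induction
   hypothesis.  The exchange needs no two-variable analysis: each X^(k)(s,x) is a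
   finite sum of products a(s) b(x) of continuous functions, and for one product
   the exchange is an integration by parts.  It suffices to treat Phi continuous
   and nonvanishing on all of R: extend Phi from [a,b] by clamping, since
   X^(k)(s,x) only depends on Phi between s and x. *)

From Stdlib Require Import Reals Lra Lia Factorial FunctionalExtensionality.
From Coquelicot Require Import Coquelicot.
Open Scope R_scope.
Open Scope C_scope.

Definition Ccont (f : R -> C) : Prop :=
  forall t, continuity_pt (fun u => Re (f u)) t /\ continuity_pt (fun u => Im (f u)) t.

Lemma Ccont_const (c : C) : Ccont (fun _ => c).
Proof. intro t; split; apply continuity_pt_const; intros ? ?; reflexivity. Qed.

Lemma Ccont_plus (f g : R -> C) : Ccont f -> Ccont g -> Ccont (fun t => f t + g t).
Proof.
  intros Hf Hg t; destruct (Hf t), (Hg t); simpl; split; now apply continuity_pt_plus.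
Qed.

Lemma Ccont_opp (f : R -> C) : Ccont f -> Ccont (fun t => - f t).
Proof. intros Hf t; destruct (Hf t); simpl; split; now apply continuity_pt_opp. Qed.

Lemma Ccont_minus (f g : R -> C) : Ccont f -> Ccont g -> Ccont (fun t => f t - g t).
Proof. intros; apply Ccont_plus; [|apply Ccont_opp]; assumption. Qed.

Lemma Ccont_mult (f g : R -> C) : Ccont f -> Ccont g -> Ccont (fun t => f t * g t).
Proof.
  intros Hf Hg t; destruct (Hf t), (Hg t); simpl; split.
  - apply continuity_pt_minus; now apply continuity_pt_mult.
  - apply continuity_pt_plus; now apply continuity_pt_mult.
Qed.

Lemma Ccont_ext (f g : R -> C) : (forall t, f t = g t) -> Ccont f -> Ccont g.
Proof. intros E Hf; replace g with f; [exact Hf|]; now extensionality t. Qed.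

Lemma Cnorm2_neq_0 (z : C) : z <> 0 -> (Re z ^ 2 + Im z ^ 2)%R <> 0%R.
Proof.
  destruct z as [x y]; simpl; intros Hz E; apply Hz.
  assert (x = 0%R) by nra; assert (y = 0%R) by nra; subst; reflexivity.
Qed.

Lemma Ccont_inv (f : R -> C) : Ccont f -> (forall t, f t <> 0) -> Ccont (fun t => / f t).
Proof.
  intros Hf Hnz t; destruct (Hf t) as [Hre Him].
  assert (Hd : continuity_pt (fun u => Re (f u) ^ 2 + Im (f u) ^ 2)%R t).
  { apply continuity_pt_plus; simpl; repeat apply continuity_pt_mult; auto;
      apply continuity_pt_const; intros ? ?; reflexivity. }
  pose proof (Cnorm2_neq_0 _ (Hnz t)).
  simpl; unfold Rdiv; split; apply continuity_pt_mult; auto;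
    try apply continuity_pt_opp; auto; apply continuity_pt_inv; auto.
Qed.

Lemma Cinv_neq_0 (z : C) : z <> 0 -> / z <> 0.
Proof.
  intros Hz E; apply Hz.
  rewrite <- (Cmult_1_l z), <- (Cinv_l z), E by exact Hz; ring.
Qed.

Lemma Ccont_ex_RInt_Re (f : R -> C) a b : Ccont f -> ex_RInt (fun u => Re (f u)) a b.
Proof.
  intro Hf; apply (ex_RInt_continuous (V := R_CompleteNormedModule)); intros t _.
  apply continuity_pt_filterlim, Hf.
Qed.

Lemma Ccont_ex_RInt_Im (f : R -> C) a b : Ccont f -> ex_RInt (fun u => Im (f u)) a b.
Proof.
  intro Hf; apply (ex_RInt_continuous (V := R_CompleteNormedModule)); intros t _.
  apply continuity_pt_filterlim, Hf.
Qed.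

Lemma CRInt_ext (f g : R -> C) a b :
  (forall t, Rmin a b < t < Rmax a b -> f t = g t) -> CRInt f a b = CRInt g a b.
Proof. intro E; unfold CRInt; f_equal; apply RInt_ext; intros; now rewrite E. Qed.

Lemma CRInt_point (f : R -> C) a : CRInt f a a = 0.
Proof. unfold CRInt; now rewrite !(RInt_point (V := R_CompleteNormedModule)). Qed.

Lemma CRInt_plus (f g : R -> C) a b : Ccont f -> Ccont g ->
  CRInt (fun t => f t + g t) a b = CRInt f a b + CRInt g a b.
Proof.
  intros Hf Hg; unfold CRInt, Cplus; simpl; f_equal;
    apply (RInt_plus (V := R_CompleteNormedModule));
    auto using Ccont_ex_RInt_Re, Ccont_ex_RInt_Im.
Qed.

Lemma CRInt_minus (f g : R -> C) a b : Ccont f -> Ccont g ->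
  CRInt (fun t => f t - g t) a b = CRInt f a b - CRInt g a b.
Proof.
  intros Hf Hg; unfold CRInt, Cminus, Cplus, Copp; simpl; f_equal;
    apply (RInt_minus (V := R_CompleteNormedModule));
    auto using Ccont_ex_RInt_Re, Ccont_ex_RInt_Im.
Qed.

Lemma CRInt_scal (c : C) (f : R -> C) a b : Ccont f ->
  CRInt (fun t => c * f t) a b = c * CRInt f a b.
Proof.
  intro Hf.
  assert (Hre := Ccont_ex_RInt_Re f a b Hf); assert (Him := Ccont_ex_RInt_Im f a b Hf).
  unfold CRInt, Cmult; simpl; f_equal.
  - rewrite (RInt_minus (V := R_CompleteNormedModule)), !(RInt_scal (V := R_CompleteNormedModule));
      auto; apply (ex_RInt_scal (V := R_CompleteNormedModule)); auto.
  - rewrite (RInt_plus (V := R_CompleteNormedModule)), !(RInt_scal (V := R_CompleteNormedModule));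
      auto; apply (ex_RInt_scal (V := R_CompleteNormedModule)); auto.
Qed.

Lemma CRInt_Chasles (f : R -> C) a b c : Ccont f ->
  CRInt f a c = CRInt f b c - CRInt f b a.
Proof.
  intros Hf; unfold CRInt, Cminus, Cplus, Copp; simpl; f_equal;
    rewrite <- (RInt_Chasles (V := R_CompleteNormedModule) _ b a c),
      <- (opp_RInt_swap (V := R_CompleteNormedModule));
    auto using Ccont_ex_RInt_Re, Ccont_ex_RInt_Im; simpl; unfold plus, opp; simpl; ring.
Qed.

Definition is_Cderive (F f : R -> C) : Prop :=
  forall t, is_derive (fun u => Re (F u)) t (Re (f t))
         /\ is_derive (fun u => Im (F u)) t (Im (f t)).

Lemma is_Cderive_CRInt (f : R -> C) c : Ccont f -> is_Cderive (CRInt f c) f.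
Proof.
  intros Hf t; unfold CRInt; simpl; split;
    [apply (is_derive_RInt (V := R_NormedModule) (fun u => Re (f u)) _ c t)
    |apply (is_derive_RInt (V := R_NormedModule) (fun u => Im (f u)) _ c t)];
    try (apply filter_forall; intro; apply (RInt_correct (V := R_CompleteNormedModule)));
    auto using Ccont_ex_RInt_Re, Ccont_ex_RInt_Im;
    apply continuity_pt_filterlim, Hf.
Qed.

Lemma is_Cderive_Ccont (F f : R -> C) : is_Cderive F f -> Ccont F.
Proof.
  intros H t; destruct (H t); split; apply continuity_pt_filterlim;
    apply (ex_derive_continuous (K := R_AbsRing) (V := R_NormedModule)); eexists; eassumption.
Qed.

Lemma Ccont_CRInt (f : R -> C) c : Ccont f -> Ccont (CRInt f c).
Proof. intro; eapply is_Cderive_Ccont, is_Cderive_CRInt; assumption. Qed.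

Lemma is_Cderive_mult (F f G g : R -> C) : is_Cderive F f -> is_Cderive G g ->
  is_Cderive (fun t => F t * G t) (fun t => f t * G t + F t * g t).
Proof.
  intros HF HG t; destruct (HF t) as [F1 F2], (HG t) as [G1 G2].
  unfold Re, Im in *; simpl; split.
  - replace (fst (f t) * fst (G t) - snd (f t) * snd (G t) + (fst (F t) * fst (g t) - snd (F t) * snd (g t)))%R
      with ((fst (f t) * fst (G t) + fst (F t) * fst (g t)) - (snd (f t) * snd (G t) + snd (F t) * snd (g t)))%R
      by ring.
    apply (is_derive_minus (K := R_AbsRing) (V := R_NormedModule));
      apply (is_derive_mult (K := R_AbsRing)); auto; intros; apply Rmult_comm.
  - replace (fst (f t) * snd (G t) + snd (f t) * fst (G t) + (fst (F t) * snd (g t) + snd (F t) * fst (g t)))%R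
      with ((fst (f t) * snd (G t) + fst (F t) * snd (g t)) + (snd (f t) * fst (G t) + snd (F t) * fst (g t)))%R
      by ring.
    apply (is_derive_plus (K := R_AbsRing) (V := R_NormedModule));
      apply (is_derive_mult (K := R_AbsRing)); auto; intros; apply Rmult_comm.
Qed.

Lemma CRInt_FTC (F f : R -> C) a b : Ccont f -> is_Cderive F f -> CRInt f a b = F b - F a.
Proof.
  intros Hf HF; unfold CRInt, Cminus, Cplus, Copp; simpl; f_equal;
    apply (is_RInt_unique (V := R_CompleteNormedModule));
    [apply (is_RInt_derive (V := R_CompleteNormedModule) (fun u => Re (F u)))
    |apply (is_RInt_derive (V := R_CompleteNormedModule) (fun u => Im (F u)))];
    intros; try apply HF; apply continuity_pt_filterlim, Hf.
Qed.

Ltac solve_Ccont :=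
  repeat match goal with
    | |- Ccont (fun _ => ?c) => apply Ccont_const
    | |- Ccont (fun _ => _ + _) => apply Ccont_plus
    | |- Ccont (fun _ => _ - _) => apply Ccont_minus
    | |- Ccont (fun _ => - _) => apply Ccont_opp
    | |- Ccont (fun _ => _ * _) => apply Ccont_mult
    | |- Ccont (CRInt _ _) => apply Ccont_CRInt
    | |- Ccont _ => assumption
    | H : forall _, Ccont _ |- Ccont _ => apply H
    | H : forall _ _, Ccont _ |- Ccont _ => apply H
    end.

Lemma CRInt_Dirichlet (p q : R -> C) x0 x : Ccont p -> Ccont q ->
  CRInt (fun s => p s * CRInt q s x) x0 x = CRInt (fun t => CRInt p x0 t * q t) x0 x.
Proof.
  intros Hp Hq.
  set (P := CRInt p x0); set (Q := CRInt q x0).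
  assert (HP : Ccont P) by now apply Ccont_CRInt.
  assert (HQ : Ccont Q) by now apply Ccont_CRInt.
  assert (Hparts : CRInt (fun t => p t * Q t + P t * q t) x0 x = P x * Q x).
  { rewrite (CRInt_FTC (fun t => P t * Q t)).
    - unfold P at 2; rewrite CRInt_point; ring.
    - solve_Ccont.
    - apply is_Cderive_mult; now apply is_Cderive_CRInt. }
  rewrite (CRInt_ext _ (fun s => Q x * p s - p s * Q s)).
  2:{ intros s _; rewrite (CRInt_Chasles q s x0 x) by exact Hq; unfold Q; ring. }
  rewrite (CRInt_ext (fun t => P t * q t) (fun t => (p t * Q t + P t * q t) - p t * Q t))
    by (intros; ring).
  rewrite !CRInt_minus, CRInt_scal, Hparts by solve_Ccont.
  unfold P; ring.
Qed.

Inductive separable : (R -> R -> C) -> Prop :=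
  | separable_mult (a b : R -> C) :
      Ccont a -> Ccont b -> separable (fun s x => a s * b x)
  | separable_plus (K L : R -> R -> C) :
      separable K -> separable L -> separable (fun s x => K s x + L s x).

Lemma separable_ext (K L : R -> R -> C) :
  (forall s x, K s x = L s x) -> separable K -> separable L.
Proof.
  intros E HK; replace L with K; [exact HK|].
  extensionality s; extensionality x; apply E.
Qed.

Lemma separable_Ccont_l (K : R -> R -> C) x : separable K -> Ccont (fun s => K s x).
Proof. induction 1; solve_Ccont. Qed.

Lemma separable_Ccont_r (K : R -> R -> C) s : separable K -> Ccont (K s).
Proof. induction 1; solve_Ccont. Qed.

Lemma separable_scal (c : C) (K : R -> R -> C) :
  separable K -> separable (fun s x => c * K s x).
Proof.
  induction 1.
  - apply (separable_ext (fun s x => (c * a s) * b x)); [intros; ring|].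
    apply separable_mult; solve_Ccont.
  - apply (separable_ext (fun s x => c * K s x + c * L s x)); [intros; ring|].
    now apply separable_plus.
Qed.

Lemma separable_CRInt (K : R -> R -> C) (w : R -> C) : separable K -> Ccont w ->
  separable (fun s x => CRInt (fun t => K s t * w t) s x).
Proof.
  intros HK Hw; induction HK as [a b Ha Hb|K L HK IHK HL IHL].
  - set (B := CRInt (fun t => b t * w t) 0).
    apply (separable_ext (fun s x => a s * B x + (- (a s * B s)) * 1)).
    + intros s x.
      rewrite (CRInt_ext _ (fun t => a s * (b t * w t))) by (intros; ring).
      rewrite CRInt_scal, (CRInt_Chasles _ s 0 x) by solve_Ccont.
      unfold B; ring.
    + apply separable_plus; apply separable_mult; unfold B; solve_Ccont.
  - apply (separable_ext (fun s x => CRInt (fun t => K s t * w t) s x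
                                    + CRInt (fun t => L s t * w t) s x)).
    + intros s x; rewrite <- CRInt_plus.
      * apply CRInt_ext; intros; ring.
      * pose proof (separable_Ccont_r K s HK); solve_Ccont.
      * pose proof (separable_Ccont_r L s HL); solve_Ccont.
    + now apply separable_plus.
Qed.

Lemma Ccont_CRInt_separable (K : R -> R -> C) (g : R -> C) x0 :
  separable K -> Ccont g -> Ccont (fun t => CRInt (fun s => g s * K s t) x0 t).
Proof.
  intros HK Hg; induction HK as [a b Ha Hb|K L HK IHK HL IHL].
  - apply (Ccont_ext (fun t => CRInt (fun s => g s * a s) x0 t * b t)); [|solve_Ccont].
    intro t; rewrite Cmult_comm, <- CRInt_scal by solve_Ccont.
    apply CRInt_ext; intros; ring.
  - apply (Ccont_ext (fun t => CRInt (fun s => g s * K s t) x0 t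
                               + CRInt (fun s => g s * L s t) x0 t)); [|solve_Ccont].
    intro t; rewrite <- CRInt_plus.
    + apply CRInt_ext; intros; ring.
    + pose proof (separable_Ccont_l K t HK); solve_Ccont.
    + pose proof (separable_Ccont_l L t HL); solve_Ccont.
Qed.

Lemma CRInt_swap_separable (K : R -> R -> C) (g w : R -> C) x0 x :
  separable K -> Ccont g -> Ccont w ->
  CRInt (fun s => g s * CRInt (fun t => K s t * w t) s x) x0 x
  = CRInt (fun t => CRInt (fun s => g s * K s t) x0 t * w t) x0 x.
Proof.
  intros HK Hg Hw; induction HK as [a b Ha Hb|K L HK IHK HL IHL].
  - rewrite (CRInt_ext _ (fun s => (g s * a s) * CRInt (fun t => b t * w t) s x)).
    2:{ intros s _.
        rewrite (CRInt_ext _ (fun t => a s * (b t * w t))) by (intros; ring).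
        rewrite CRInt_scal by solve_Ccont; ring. }
    rewrite CRInt_Dirichlet by solve_Ccont.
    apply CRInt_ext; intros t _.
    rewrite (CRInt_ext (fun s => g s * (a s * b t)) (fun s => b t * (g s * a s)))
      by (intros; ring).
    rewrite CRInt_scal by solve_Ccont; ring.
  - pose proof (separable_Ccont_l _ x (separable_CRInt K w HK Hw)) as HKw.
    pose proof (separable_Ccont_l _ x (separable_CRInt L w HL Hw)) as HLw.
    assert (HgK : forall t, Ccont (fun s => g s * K s t)).
    { intro t; pose proof (separable_Ccont_l K t HK); solve_Ccont. }
    assert (HgL : forall t, Ccont (fun s => g s * L s t)).
    { intro t; pose proof (separable_Ccont_l L t HL); solve_Ccont. }
    rewrite (CRInt_ext _ (fun s => g s * CRInt (fun t => K s t * w t) s x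
                                  + g s * CRInt (fun t => L s t * w t) s x)).
    2:{ intros s _; rewrite <- Cmult_plus_distr_l, <- CRInt_plus.
        - f_equal; apply CRInt_ext; intros; ring.
        - pose proof (separable_Ccont_r K s HK); solve_Ccont.
        - pose proof (separable_Ccont_r L s HL); solve_Ccont. }
    rewrite (CRInt_ext (fun t => CRInt _ x0 t * w t)
               (fun t => CRInt (fun s => g s * K s t) x0 t * w t
                         + CRInt (fun s => g s * L s t) x0 t * w t)).
    2:{ intros t _; rewrite <- Cmult_plus_distr_r, <- CRInt_plus by auto.
        f_equal; apply CRInt_ext; intros; ring. }
    rewrite !CRInt_plus, IHK, IHL by (solve_Ccont; now apply Ccont_CRInt_separable).
    reflexivity.
Qed.

Lemma signpow_even (j : nat) (z : C) : Nat.even j = true -> signpow j z = z.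
Proof. intro H; unfold signpow; now rewrite H. Qed.

Lemma signpow_add_even (j k : nat) (z : C) :
  Nat.even j = true -> signpow (j + k) z = signpow k z.
Proof. intro H; unfold signpow; now rewrite Nat.even_add, H; destruct (Nat.even k). Qed.

Lemma Ccont_signpow (Psi : R -> C) (k : nat) :
  Ccont Psi -> (forall t, Psi t <> 0) -> Ccont (fun t => signpow k (Psi t)).
Proof.
  intros HPsi Hnz; unfold signpow; destruct (Nat.even k); [exact HPsi|].
  now apply Ccont_inv.
Qed.

Lemma Xpow_S (Psi : R -> C) (k : nat) s x :
  Xpow Psi (S k) s x
  = INR (S k) * CRInt (fun t => Xpow Psi k s t * signpow (S k) (Psi t)) s x.
Proof. reflexivity. Qed.

Lemma separable_Xpow (Psi : R -> C) (k : nat) :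
  Ccont Psi -> (forall t, Psi t <> 0) -> separable (Xpow Psi k).
Proof.
  intros HPsi Hnz; induction k as [|k IHk].
  - apply (separable_ext (fun _ _ => 1 * 1)); [intros; simpl; ring|].
    apply separable_mult; apply Ccont_const.
  - apply (separable_ext (fun s x => INR (S k)
             * CRInt (fun t => Xpow Psi k s t * signpow (S k) (Psi t)) s x));
      [reflexivity|].
    apply separable_scal, separable_CRInt; [exact IHk|].
    now apply Ccont_signpow.
Qed.

Definition volterra_coef (p k : nat) : R :=
  (INR (fact p) * INR (fact k) / INR (fact (S p + k)))%R.

Lemma volterra_coef_0 (p : nat) : (volterra_coef p 0 * INR (S p))%R = 1%R.
Proof.
  unfold volterra_coef; rewrite Nat.add_0_r; simpl (fact 0).
  change (fact (S p)) with (S p * fact p)%nat; rewrite mult_INR; simpl (INR 1).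
  field; split; [apply INR_fact_neq_0|apply not_0_INR; lia].
Qed.

Lemma volterra_coef_S (p k : nat) :
  (INR (S k) * volterra_coef p k)%R = (volterra_coef p (S k) * INR (S (S p + k)))%R.
Proof.
  unfold volterra_coef; rewrite Nat.add_succ_r.
  change (fact (S k)) with (S k * fact k)%nat.
  change (fact (S (S p + k))) with (S (S p + k) * fact (S p + k))%nat.
  rewrite !mult_INR; field; split; [apply INR_fact_neq_0|apply not_0_INR; lia].
Qed.

Lemma volterra_Xpow_odd (Psi : R -> C) (p k : nat) x0 x :
  Ccont Psi -> (forall t, Psi t <> 0) -> Nat.odd p = true ->
  volterra (fun s t => Psi t * Xpow Psi p s t) (Xpow Psi k) x0 x
  = volterra_coef p k * Xpow Psi (S p + k) x0 x.
Proof.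
  intros HPsi Hnz Hp; unfold volterra.
  assert (HSp : Nat.even (S p) = true) by now rewrite Nat.even_succ.
  assert (HX : forall j s, Ccont (Xpow Psi j s))
    by (intros; now apply separable_Ccont_r, separable_Xpow).
  assert (HXl : forall j x, Ccont (fun s => Xpow Psi j s x))
    by (intros; now apply separable_Ccont_l, separable_Xpow).
  assert (Hw : forall j, Ccont (fun t => signpow j (Psi t)))
    by (intro; now apply Ccont_signpow).
  revert x; induction k as [|k IHk]; intro x.
  - rewrite Nat.add_0_r, Xpow_S.
    rewrite (CRInt_ext _ (fun s => Xpow Psi p x0 s * signpow (S p) (Psi s))).
    2:{ intros s _; rewrite signpow_even by exact HSp; simpl; ring. }
    rewrite Cmult_assoc, <- RtoC_mult, volterra_coef_0; ring.
  - rewrite (CRInt_ext _ (fun s => INR (S k) * ((Psi s * Xpow Psi p x0 s)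
               * CRInt (fun t => Xpow Psi k s t * signpow (S k) (Psi t)) s x))).
    2:{ intros s _; rewrite Xpow_S; ring. }
    rewrite CRInt_scal.
    2:{ pose proof (separable_Ccont_l _ x
          (separable_CRInt _ _ (separable_Xpow Psi k HPsi Hnz) (Hw (S k)))).
        solve_Ccont. }
    rewrite CRInt_swap_separable by (solve_Ccont; now apply separable_Xpow).
    rewrite (CRInt_ext _ (fun t => volterra_coef p k
               * (Xpow Psi (S p + k) x0 t * signpow (S (S p + k)) (Psi t)))).
    2:{ intros t _; rewrite <- Nat.add_succ_r, signpow_add_even, IHk by exact HSp.
        ring. }
    rewrite CRInt_scal by solve_Ccont.
    rewrite Nat.add_succ_r, (Xpow_S _ (S p + k)), !Cmult_assoc, <- !RtoC_mult,
      volterra_coef_S.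
    reflexivity.
Qed.

Lemma Xpow_local (F G : R -> C) a b (k : nat) s x :
  (forall t, a <= t <= b -> F t = G t) -> a <= s <= b -> a <= x <= b ->
  Xpow F k s x = Xpow G k s x.
Proof.
  intros HFG Hs; revert x; induction k as [|k IHk]; intros x Hx; [reflexivity|].
  rewrite !Xpow_S; f_equal; apply CRInt_ext; intros t Ht.
  assert (a <= t <= b) by (unfold Rmin, Rmax in Ht; destruct Rle_dec; lra).
  unfold signpow; rewrite IHk, HFG by assumption; reflexivity.
Qed.

Lemma volterra_Xpow_odd_local (F Psi : R -> C) a b (p : nat) x0 x :
  (forall t, a <= t <= b -> F t = Psi t) -> Ccont Psi -> (forall t, Psi t <> 0) ->
  Nat.odd p = true -> a <= x0 <= b -> a <= x <= b -> forall k : nat,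
  volterra (fun s t => F t * Xpow F p s t) (Xpow F k) x0 x
  = volterra_coef p k * Xpow F (S p + k) x0 x.
Proof.
  intros HFG HPsi Hnz Hp Hx0 Hx k.
  rewrite (Xpow_local F Psi a b) by assumption.
  rewrite <- volterra_Xpow_odd by assumption.
  unfold volterra; apply CRInt_ext; intros t Ht.
  assert (a <= t <= b) by (unfold Rmin, Rmax in Ht; destruct Rle_dec; lra).
  rewrite HFG, !(Xpow_local F Psi a b) by assumption; reflexivity.
Qed.

Lemma Ccont_continuous (f : R -> C) : (forall t, continuous f t) -> Ccont f.
Proof.
  intros Hf t; split; apply continuity_pt_filterlim.
  - apply (filterlim_comp _ _ _ f fst _ (locally (f t))); [apply Hf|].
    apply (continuous_fst (U := R_UniformSpace) (V := R_UniformSpace)).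
  - apply (filterlim_comp _ _ _ f snd _ (locally (f t))); [apply Hf|].
    apply (continuous_snd (U := R_UniformSpace) (V := R_UniformSpace)).
Qed.

Definition clamp (a b t : R) : R := Rmax a (Rmin b t).

Lemma clamp_in a b t : a <= b -> a <= clamp a b t <= b.
Proof. intro; unfold clamp, Rmax, Rmin; repeat destruct Rle_dec; lra. Qed.

Lemma clamp_id a b t : a <= t <= b -> clamp a b t = t.
Proof. intro; unfold clamp, Rmax, Rmin; repeat destruct Rle_dec; lra. Qed.

Lemma clamp_1_Lipschitz a b u v :
  a <= b -> Rabs (clamp a b u - clamp a b v) <= Rabs (u - v).
Proof.
  intro; unfold clamp, Rmax, Rmin; repeat destruct Rle_dec;
    unfold Rabs; repeat destruct Rcase_abs; lra.
Qed.

Lemma clamp_continuous a b t : a <= b ->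
  filterlim (clamp a b) (locally t)
    (within (fun y => a <= y <= b) (locally (clamp a b t))).
Proof.
  intros Hab P [eps He]; exists eps; intros u Hu.
  apply He; [|apply clamp_in; exact Hab].
  unfold ball in *; simpl in *; unfold AbsRing_ball, abs, minus, plus, opp in *; simpl in *.
  eapply Rle_lt_trans; [apply clamp_1_Lipschitz|]; assumption.
Qed.

Lemma nonvanishing_continuous_extension a b (Phi : R -> C) : a <= b ->
  (forall t, a <= t <= b ->
     filterlim Phi (within (fun y => a <= y <= b) (locally t)) (locally (Phi t))) ->
  (forall t, a <= t <= b -> Phi t <> 0) ->
  exists Psi : R -> C, Ccont Psi /\ (forall t, Psi t <> 0)
                   /\ (forall t, a <= t <= b -> Phi t = Psi t).
Proof.
  intros Hab Hcont Hnz; exists (fun t => Phi (clamp a b t)); split; [|split].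
  - apply Ccont_continuous; intro t.
    eapply filterlim_comp; [apply clamp_continuous, Hab|].
    apply Hcont, clamp_in, Hab.
  - intro t; apply Hnz, clamp_in, Hab.
  - intros t Ht; now rewrite clamp_id.
Qed.

Close Scope C_scope.

Theorem proposition5 (a b : R) (Phi : R -> C)
  (Hcont : forall t, a <= t <= b ->
     filterlim Phi (within (fun y => a <= y <= b) (locally t)) (locally (Phi t)))
  (Hnz : forall t, a <= t <= b -> Phi t <> RtoC 0)
  (n m : nat) (Hn : (1 <= n)%nat) (Hm : (1 <= m)%nat)
  (x0 x : R) (Hx0 : a <= x0 <= b) (Hx : a <= x <= b) :
  volterra (fun s t => Cmult (Phi t) (Xpow Phi (2*n-1) s t)) (Xpow Phi (2*m)) x0 x
    = Cmult (RtoC (A_coef n m)) (Xpow Phi (2*n+2*m) x0 x)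
  /\ volterra (fun s t => Cmult (Cinv (Phi t)) (Xtilde Phi (2*n-1) s t)) (Xtilde Phi (2*m)) x0 x
    = Cmult (RtoC (A_coef n m)) (Xtilde Phi (2*n+2*m) x0 x)
  /\ volterra (fun s t => Cmult (Phi t) (Xpow Phi (2*n-1) s t)) (Xpow Phi (2*m-1)) x0 x
    = Cmult (RtoC (B_coef n m)) (Xpow Phi (2*n+2*m-1) x0 x)
  /\ volterra (fun s t => Cmult (Cinv (Phi t)) (Xtilde Phi (2*n-1) s t)) (Xtilde Phi (2*m-1)) x0 x
    = Cmult (RtoC (B_coef n m)) (Xtilde Phi (2*n+2*m-1) x0 x).
Proof.
  destruct (nonvanishing_continuous_extension a b Phi) as (Psi & HPsi & HPsi0 & HPhi);
    [lra|exact Hcont|exact Hnz|].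
  assert (HPhi' : forall t, a <= t <= b -> Cinv (Phi t) = Cinv (Psi t))
    by (intros; f_equal; auto).
  assert (HPsi' : Ccont (fun t => Cinv (Psi t))) by now apply Ccont_inv.
  assert (HPsi0' : forall t, Cinv (Psi t) <> RtoC 0) by (intro; now apply Cinv_neq_0).
  assert (Hodd : Nat.odd (2*n-1) = true).
  { rewrite <- Nat.even_succ; replace (S (2*n-1)) with (2*n)%nat by lia.
    apply Nat.even_mul. }
  assert (EA : A_coef n m = volterra_coef (2*n-1) (2*m)).
  { unfold A_coef, volterra_coef.
    now replace (S (2*n-1) + 2*m)%nat with (2*n+2*m)%nat by lia. }
  assert (EB : B_coef n m = volterra_coef (2*n-1) (2*m-1)).
  { unfold B_coef, volterra_coef.
    now replace (S (2*n-1) + (2*m-1))%nat with (2*n+2*m-1)%nat by lia. }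
  replace (2*n+2*m-1)%nat with (S (2*n-1) + (2*m-1))%nat by lia.
  replace (2*n+2*m)%nat with (S (2*n-1) + 2*m)%nat by lia.
  rewrite EA, EB; unfold Xtilde.
  pose proof (volterra_Xpow_odd_local Phi Psi a b _ x0 x HPhi HPsi HPsi0 Hodd Hx0 Hx).
  pose proof (volterra_Xpow_odd_local (fun t => Cinv (Phi t)) (fun t => Cinv (Psi t)) a b
                _ x0 x HPhi' HPsi' HPsi0' Hodd Hx0 Hx).
  repeat split; auto.
Qed.
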